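(* Let $n\ge 1$ and let ${\rm id}\in S_n$ be the identity permutation. For a pair $(P,Q)$ of standard Young tableaux of a common shape $\lambda\vdash n$, \[ \mathcal{P}({\rm id}\rightarrow P,Q)=\begin{cases}t^{n(\lambda)}\prod_{i=1}^{|\lambda|}\alpha_{P^{(i)}/P^{(i-1)}}(q,t)&\text{if }P=Q,\\ 0&\text{otherwise,}\end{cases} \] where $P^{(i)}$ is the shape of the subtableau of $P$ consisting of entries $\le i$.
   Context: All quantities are rational functions of indeterminates $q,t$. Partitions are Young diagrams in French convention (cells $(x,y)\in\mathbb{Z}_{>0}^2$ with $x\le\lambda_y$), $\lambda'$ the conjugate; for $c=(x,y)\in\lambda$, $a_\lambda(c)=\lambda_y-x$, $\ell_\lambda(c)=\lambda'_x-y$; $n(\kappa)=\sum_{c\in\kappa}\ell_\kappa(c)$, $n'(\kappa)=\sum_{c\in\kappa}a_\kappa(c)$, $n(\rho/\kappa)=n(\rho)-n(\kappa)$, $n'(\rho/\kappa)=n'(\rho)-n'(\kappa)$. $\mathcal{U}(\lambda)$, $\mathcal{D}(\lambda)$: partitions obtained by adding, resp. removing, one cell; $\mathcal{D}^*(\lambda)=\mathcal{D}(\lambda)\cup\{\lambda\}$. For $\kappa\subseteq\rho$, $\mathcal{R}_{\rho/\kappa}$ (resp. $\mathcal{C}_{\rho/\kappa}$): cells of $\kappa$ in a row (resp. column) containing a cell of $\rho/\kappa$. $[i,j]=1-q^it^j$. For $\kappa\lessdot\rho$: $\alpha_{\rho/\kappa}=\prod_{c\in\mathcal{R}_{\rho/\kappa}}\frac{[a_\kappa(c),\ell_\kappa(c)+1]}{[a_\rho(c),\ell_\rho(c)+1]}\prod_{c\in\mathcal{C}_{\rho/\kappa}}\frac{[a_\kappa(c)+1,\ell_\kappa(c)]}{[a_\rho(c)+1,\ell_\rho(c)]}$,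 $\beta_{\rho/\kappa}=1/\alpha_{\rho/\kappa}$. Local probabilities: $\mathcal{P}_\lambda(\lambda\rightarrow\nu)=t^{n(\nu/\lambda)}\alpha_{\nu/\lambda}$; for $\mu\in\mathcal{D}(\lambda)$, $\nu\in\mathcal{U}(\lambda)$, with $A=n'(\lambda/\mu)-n'(\nu/\lambda)$, $B=n(\nu/\lambda)-n(\lambda/\mu)$: $\mathcal{P}_\lambda(\mu\rightarrow\nu)=t^{B-1}\alpha_{\nu/\lambda}\beta_{\lambda/\mu}\frac{(1-q)(1-t)}{(1-q^At^B)(1-q^{A+1}t^{B-1})}$. Growths: for $\sigma\in S_n$, take the $n\times n$ grid with vertices $(i,j)$, $0\le i,j\le n$ (matrix coordinates); square $(i,j)$ has vertices NW $(i-1,j-1)$, NE $(i-1,j)$, SW $(i,j-1)$, SE $(i,j)$ and contains a 1 iff $i=\sigma(j)$. A growth associated with $\sigma$ is a labeling $\Lambda_{ij}$ by partitions with $\Lambda_{ij}\subseteq\Lambda_{i,j+1}$, $\Lambda_{ij}\subseteq\Lambda_{i+1,j}$, $|\Lambda_{ij}|$ = number of squares $(i',j')$ with $i'\le i,j'\le j$ containing a 1. $P(\Lambda)$ (resp. $Q(\Lambda)$) has entry $i$ in the cell $\Lambda_{i,n}/\Lambda_{i-1,n}$ (resp. $\Lambda_{n,i}/\Lambda_{n,i-1}$). A square is of type III if its NE and SW vertices are both $\lambda$, NW vertex $\mu\in\mathcal{D}^*(\lambda)$, SE vertex $\nu\in\mathcal{U}(\lambda)$, and then $\mathcal{P}(\square)=\mathcal{P}_\lambda(\mu\rightarrow\nu)$;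 otherwise $\mathcal{P}(\square)=1$. $\mathcal{P}(\Lambda)=\prod_\square\mathcal{P}(\square)$ and $\mathcal{P}(\sigma\rightarrow P,Q)=\sum\mathcal{P}(\Lambda)$ over growths $\Lambda$ associated with $\sigma$ with $P(\Lambda)=P$, $Q(\Lambda)=Q$. *)

From HB Require Import structures.
From mathcomp Require Import all_boot all_order all_algebra all_fingroup.
From mathcomp Require Import fraction.
Set Implicit Arguments. Unset Strict Implicit. Unset Printing Implicit Defensive.
Import Order.TTheory GRing.Theory Num.Theory.
Local Open Scope ring_scope.

Definition RF : fieldType := {fraction {poly {poly rat}}}.
Definition qv : RF := FracField.tofrac (('X : {poly rat})%:P).
Definition tv : RF := FracField.tofrac ('X : {poly {poly rat}}).

Definition br (i j : nat) : RF := 1 - qv ^+ i * tv ^+ j.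

(* ---------- Partitions ----------
   A partition is a seq nat of parts lambda_1 >= lambda_2 >= ... ;
   all operations below ignore trailing zero parts (so zero-padded
   sequences represent the same partition). Cells are (x,y) with
   1 <= y, 1 <= x <= lambda_y (French convention, y = row). *)
Definition is_partition (l : seq nat) : bool :=
  sorted geq l && all (fun p => 0 < p)%N l.

Definition part (l : seq nat) (y : nat) : nat := nth 0%N l y.-1.
Definition conj (l : seq nat) (x : nat) : nat := count (fun r => x <= r)%N l.

Definition cells (l : seq nat) : seq (nat * nat) :=
  flatten [seq [seq (x, y) | x <- iota 1 (part l y)] | y <- iota 1 (size l)].

Definition arm (l : seq nat) (c : nat * nat) : nat := (part l c.2 - c.1)%N.
Definition leg (l : seq nat) (c : nat * nat) : nat := (conj l c.1 - c.2)%N.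

Definition nfun (l : seq nat) : nat := \sum_(c <- cells l) leg l c.
Definition nfun' (l : seq nat) : nat := \sum_(c <- cells l) arm l c.

Definition nskew (r k : seq nat) : int := (nfun r)%:Z - (nfun k)%:Z.
Definition nskew' (r k : seq nat) : int := (nfun' r)%:Z - (nfun' k)%:Z.

Definition sameP (a b : seq nat) : bool :=
  [seq x <- a | (0 < x)%N] == [seq x <- b | (0 < x)%N].
Definition subP (k r : seq nat) : bool :=
  all (fun y => nth 0%N k y <= nth 0%N r y)%N (iota 0 (maxn (size k) (size r))).
Definition covers (k r : seq nat) : bool := subP k r && (sumn r == (sumn k).+1).

Definition Rcells (k r : seq nat) : seq (nat * nat) :=
  [seq c <- cells k | (part k c.2 < part r c.2)%N].
Definition Ccells (k r : seq nat) : seq (nat * nat) :=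
  [seq c <- cells k | (conj k c.1 < conj r c.1)%N].

Definition alpha (r k : seq nat) : RF :=
  (\prod_(c <- Rcells k r) (br (arm k c) (leg k c).+1 / br (arm r c) (leg r c).+1)) *
  (\prod_(c <- Ccells k r) (br (arm k c).+1 (leg k c) / br (arm r c).+1 (leg r c))).
Definition beta (r k : seq nat) : RF := (alpha r k)^-1.

Definition locP (la mu nu : seq nat) : RF :=
  if sameP mu la then tv ^ nskew nu la * alpha nu la
  else
    let A := nskew' la mu - nskew' nu la in
    let B := nskew nu la - nskew la mu in
    tv ^ (B - 1) * alpha nu la * beta la mu *
      ((1 - qv) * (1 - tv) /
       ((1 - qv ^ A * tv ^ B) * (1 - qv ^ (A + 1) * tv ^ (B - 1)))).

(* ---------- Growths ----------
   A labeling of the grid vertices (i,j), 0 <= i,j <= n, by partitions of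
   size <= n, each encoded as a zero-padded n-tuple of parts (a unique
   encoding for weakly decreasing tuples). *)
Definition labeling (n : nat) := {ffun 'I_n.+1 * 'I_n.+1 -> n.-tuple 'I_n.+1}.

Definition lab n (L : labeling n) (i j : nat) : seq nat :=
  map val (tval (L (inord i, inord j))).

(* sigma in S_n acting on {1..n} via 'I_n (value k stands for k+1):
   square (i,j) contains a 1 iff i = sigma(j). *)
Definition is_growth n (s : 'S_n) (L : labeling n) : bool :=
  [forall i : 'I_n.+1, forall j : 'I_n.+1,
    [&& sorted geq (lab L i j),
        (j < n)%N ==> subP (lab L i j) (lab L i j.+1),
        (i < n)%N ==> subP (lab L i j) (lab L i.+1 j) &
        sumn (lab L i j) == #|[set j' : 'I_n | (j' < j)%N && (s j' < i)%N]| ]].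

(* The tableau with entry i in the cell c i / c (i-1), 1 <= i <= n,
   given as the list of its rows (row 1 first), each row increasing. *)
Definition tab_of_chain (c : nat -> seq nat) (n : nat) : seq (seq nat) :=
  [seq r <- [seq [seq i <- iota 1 n | (nth 0 (c i.-1) y < nth 0 (c i) y)%N]
            | y <- iota 0 n] | r != [::]].

Definition tabP n (L : labeling n) := tab_of_chain (fun i => lab L i n) n.
Definition tabQ n (L : labeling n) := tab_of_chain (fun i => lab L n i) n.

Definition sq_weight n (L : labeling n) (i j : nat) : RF :=
  let NW := lab L i.-1 j.-1 in let NE := lab L i.-1 j in
  let SW := lab L i j.-1 in let SE := lab L i j in
  if [&& sameP NE SW, sameP NW NE || covers NW NE & covers NE SE]
  then locP NE NW SE else 1.

Definition growth_weight n (L : labeling n) : RF :=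
  \prod_(i < n) \prod_(j < n) sq_weight L i.+1 j.+1.

Definition Pprob n (s : 'S_n) (P Q : seq (seq nat)) : RF :=
  \sum_(L : labeling n | [&& is_growth s L, tabP L == P & tabQ L == Q])
     growth_weight L.

(* ---------- Standard Young tableaux ----------
   A tableau is the list of its rows (row 1 = bottom row, French). *)

Definition is_SYT (n : nat) (T : seq (seq nat)) : bool :=
  [&& is_partition (shape T),
      perm_eq (flatten T) (iota 1 n),
      all (sorted ltn) T &
      all (fun y => all (fun x => nth 0 (nth [::] T y) x < nth 0 (nth [::] T y.+1) x)%N
                        (iota 0 (size (nth [::] T y.+1))))
          (iota 0 (size T))].

(* P^(i): shape of the subtableau of entries <= i (possibly with trailing
   zero parts, which are ignored by all partition operations) *)
Definition subshape (T : seq (seq nat)) (i : nat) : seq nat :=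
  [seq count (fun e => e <= i)%N r | r <- T].

From Pilot Require Import Defs.
From HB Require Import structures.
From mathcomp Require Import all_boot all_order all_algebra all_fingroup.
From mathcomp Require Import fraction zify.
Import Order.TTheory GRing.Theory Num.Theory.
Set Implicit Arguments. Unset Strict Implicit. Unset Printing Implicit Defensive.

(* For the identity permutation the square (i,j) holds a 1 iff i = j, so a growth has
   |Lambda_ij| = min(i,j); since labels grow along rows and columns, Lambda_ij is then
   the diagonal label Lambda_kk with k = min(i,j).  A growth is thus one saturated
   chain Lambda_00 < Lambda_11 < ... < Lambda_nn, read off both as P and as Q: there is
   no growth when P <> Q, and exactly one when P = Q, namely the chain of subshapes
   of P.  Only the diagonal squares are of type III, with mu = lambda = Lambda_ii and
   nu = Lambda_(i+1)(i+1); their weights t^n(nu/lambda) alpha_(nu/lambda) multiply to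
   the claimed product, the powers of t telescoping to t^n(shape P). *)

(* Partitions are compared up to trailing zero parts: growth labels are zero-padded
   n-tuples, while subshapes of a tableau have one part per row. *)
Definition parts_eq (a b : seq nat) := nth 0 a =1 nth 0 b.
Definition parts_le (a b : seq nat) := forall y, nth 0 a y <= nth 0 b y.

Lemma nth_cat_nseq0 (l : seq nat) k : nth 0 (l ++ nseq k 0) =1 nth 0 l.
Proof.
move=> y; rewrite nth_cat; case: ltnP => // le_l_y.
by rewrite nth_nseq nth_default //; case: ifP.
Qed.

Lemma parts_eq_pad a b : parts_eq a b ->
  a ++ nseq (size b - size a) 0 = b ++ nseq (size a - size b) 0.
Proof.
move=> eq_ab; apply: (@eq_from_nth _ 0); first by rewrite !size_cat !size_nseq; lia.
by move=> y _; rewrite !nth_cat_nseq0.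
Qed.

Lemma cells_cat_nseq0 l k : cells (l ++ nseq k 0) = cells l.
Proof.
rewrite /cells size_cat iotaD map_cat flatten_cat -[RHS]cats0; congr (_ ++ _).
  by apply: eq_allpairsr => y; rewrite /part nth_cat_nseq0.
rewrite size_nseq; set ys := iota _ k.
have : all (fun y => part (l ++ nseq k 0) y == 0) ys.
  apply/allP => y; rewrite mem_iota => /andP[lt_l_y _].
  by rewrite /part nth_cat_nseq0 nth_default //; lia.
by elim: ys => //= y ys IH /andP[/eqP -> /IH].
Qed.

(* For x = 0 the padding is visible: conj l 0 counts the zero parts too. *)
Lemma conj_cat_nseq0 l k x : 0 < x -> conj (l ++ nseq k 0) x = conj l x.
Proof.
move=> x_gt0; rewrite /conj count_cat addnC.
rewrite (@eq_in_count _ _ pred0) ?count_pred0 // => r /nseqP[-> _].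
by rewrite leqn0; case: x x_gt0.
Qed.

Section PartsEq.
Variables a b : seq nat.
Hypothesis eq_ab : parts_eq a b.

Lemma sumn_parts_eq : sumn a = sumn b.
Proof.
have := congr1 sumn (parts_eq_pad eq_ab); rewrite !sumn_cat.
by rewrite !sumn_nseq !mul0n !addn0.
Qed.

Lemma cells_parts_eq : cells a = cells b.
Proof. by rewrite -(cells_cat_nseq0 a (size b - size a)) parts_eq_pad // cells_cat_nseq0. Qed.

Lemma conj_parts_eq x : 0 < x -> conj a x = conj b x.
Proof.
move=> x_gt0; rewrite -(conj_cat_nseq0 _ (size b - size a) x_gt0).
by rewrite parts_eq_pad ?conj_cat_nseq0.
Qed.

Lemma arm_parts_eq c : arm a c = arm b c.
Proof. by rewrite /arm /part eq_ab. Qed.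

Lemma leg_parts_eq c : 0 < c.1 -> leg a c = leg b c.
Proof. by move=> c1_gt0; rewrite /leg conj_parts_eq. Qed.

End PartsEq.

Lemma cells_gt0 l c : c \in cells l -> 0 < c.1.
Proof. by case/flatten_mapP => y _ /mapP[x]; rewrite mem_iota => /andP[x_gt0 _] ->. Qed.

Lemma nfun_parts_eq a b : parts_eq a b -> nfun a = nfun b.
Proof.
move=> eq_ab; rewrite /nfun -(cells_parts_eq eq_ab); apply: eq_big_seq => c /cells_gt0.
exact: leg_parts_eq.
Qed.

Lemma alpha_parts_eq r k r' k' :
  parts_eq r r' -> parts_eq k k' -> alpha r k = alpha r' k'.
Proof.
move=> eq_r eq_k; rewrite /alpha /Rcells /Ccells -(cells_parts_eq eq_k).
rewrite (eq_filter (a2 := fun c => part k' c.2 < part r' c.2)); last first.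
  by move=> c; rewrite /part eq_r eq_k.
rewrite (eq_in_filter (a1 := fun c => conj k c.1 < conj r c.1)
                      (a2 := fun c => conj k' c.1 < conj r' c.1)); last first.
  by move=> c /cells_gt0 c1_gt0; rewrite (conj_parts_eq eq_r) ?(conj_parts_eq eq_k).
congr (_ * _)%R; apply: eq_big_seq => c; rewrite mem_filter => /andP[_ /cells_gt0 c1_gt0];
  by rewrite (arm_parts_eq eq_r) (arm_parts_eq eq_k) (leg_parts_eq eq_r) ?(leg_parts_eq eq_k).
Qed.

Lemma subP_parts_le a b : reflect (parts_le a b) (subP a b).
Proof.
apply: (iffP allP) => [le_ab y | le_ab y _]; last exact: le_ab.
case: (ltnP y (maxn (size a) (size b))) => lt_y; first by apply: le_ab; rewrite mem_iota.
by rewrite !nth_default //; lia.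
Qed.

Lemma sumn_nth_big s N : size s <= N -> sumn s = \sum_(i < N) nth 0 s i.
Proof.
move=> le_sN; rewrite sumnE (big_nth 0) big_mkord (big_ord_widen _ _ le_sN) big_mkcond /=.
by apply: eq_bigr => i _; case: ltnP => // ?; rewrite nth_default.
Qed.

Lemma parts_le_gap a b :
  parts_le a b -> forall y, nth 0 b y - nth 0 a y + sumn a <= sumn b.
Proof.
move=> le_ab y; set N := maxn (maxn (size a) (size b)) y.+1.
have lt_yN : y < N by rewrite leq_max leqnn orbT.
have -> : sumn b = \sum_(i < N) (nth 0 b i - nth 0 a i) + sumn a.
  rewrite !(sumn_nth_big (N := N)) ?leq_max ?leqnn ?orbT // -big_split.
  by apply: eq_bigr => i _ /=; rewrite subnK ?le_ab.
by rewrite leq_add2r (bigD1 (Ordinal lt_yN)) //= leq_addr.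
Qed.

Lemma nth_leq_sumn s y : nth 0 s y <= sumn s.
Proof.
have le0s : parts_le [::] s by move=> z; rewrite nth_nil.
by have := parts_le_gap le0s y; rewrite nth_nil subn0 addn0.
Qed.

Lemma parts_le_sumn_eq a b : parts_le a b -> sumn b = sumn a -> parts_eq a b.
Proof. by move=> le_ab eq_sumn y; have := parts_le_gap le_ab y; have := le_ab y; lia. Qed.

Lemma covers_nth a b : covers a b -> forall y, nth 0 a y <= nth 0 b y <= (nth 0 a y).+1.
Proof.
case/andP=> /subP_parts_le le_ab /eqP sumn_b y.
by have := parts_le_gap le_ab y; have := le_ab y; lia.
Qed.

Lemma sameP_sumn a b : Defs.sameP a b -> sumn a = sumn b.
Proof.
have sumn_pos s : sumn [seq x <- s | 0 < x] = sumn s by elim: s => //= -[|x] s /= ->.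
by move/eqP=> eq_ab; rewrite -sumn_pos eq_ab sumn_pos.
Qed.

Lemma card_ord_ltn n m : m <= n -> #|[set j : 'I_n | j < m]| = m.
Proof.
move=> le_mn; rewrite -sum1dep_card.
transitivity (\sum_(i < m) 1); last by rewrite sum1_card card_ord.
by rewrite (big_ord_widen_cond _ xpredT (fun=> 1) le_mn).
Qed.

Lemma card_id_rectangle n i j : j <= n ->
  #|[set j' : 'I_n | (j' < j) && ((1%g : 'S_n) j' < i)]| = minn i j.
Proof.
move=> le_jn; rewrite (eq_finset (fun j' : 'I_n => j' < minn i j)); last first.
  by move=> j'; rewrite perm1 ltn_min andbC.
by rewrite card_ord_ltn // (leq_trans (geq_minr _ _)).
Qed.

Lemma size_lab n (L : labeling n) i j : size (lab L i j) = n.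
Proof. by rewrite /lab size_map size_tuple. Qed.

Lemma lab_parts_eq n (L L' : labeling n) i j i' j' :
  parts_eq (lab L i j) (lab L' i' j') -> lab L i j = lab L' i' j'.
Proof. by move=> eq_lab; apply: (@eq_from_nth _ 0) => [|y _]; rewrite ?size_lab ?eq_lab. Qed.

Definition diagonal n (L : labeling n) i := lab L i i.

Lemma eq_tab_of_chain (c c' : nat -> seq nat) n :
  (forall i, i <= n -> parts_eq (c i) (c' i)) -> tab_of_chain c n = tab_of_chain c' n.
Proof.
move=> eq_c; rewrite /tab_of_chain; congr filter; apply/eq_map => y.
apply/eq_in_filter => i; rewrite mem_iota => /andP[i_gt0 le_in].
by rewrite !eq_c //; lia.
Qed.

Lemma tv_neq0 : tv != 0%R.
Proof. by rewrite tofrac_eq0 polyX_eq0. Qed.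

Lemma prod_expz_telescope (F : fieldType) (x : F) (f : nat -> int) m : x != 0%R ->
  (\prod_(i < m) x ^ (f i.+1 - f i) = x ^ (f m - f 0))%R.
Proof.
move=> x_neq0; elim: m => [|m IH]; first by rewrite big_ord0 subrr expr0z.
by rewrite big_ord_recr /= IH -expfzDr // addrC addrA subrK.
Qed.

Section IdentityGrowth.

Variables (n : nat) (L : labeling n).
Hypothesis L_growth : is_growth 1%g L.

Lemma is_growth1_at i j : i <= n -> j <= n ->
  [/\ sorted geq (lab L i j), j < n -> parts_le (lab L i j) (lab L i j.+1),
      i < n -> parts_le (lab L i j) (lab L i.+1 j) & sumn (lab L i j) = minn i j].
Proof.
move=> le_in le_jn; move/forallP/(_ (inord i))/forallP/(_ (inord j)): L_growth.
rewrite !inordK ?ltnS // card_id_rectangle // => /and4P[sorted_lab le_east le_south /eqP ->].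
split=> // [lt_jn | lt_in]; apply/subP_parts_le; first exact: (implyP le_east).
exact: (implyP le_south).
Qed.

Lemma sumn_lab i j : i <= n -> j <= n -> sumn (lab L i j) = minn i j.
Proof. by move=> le_in le_jn; case: (is_growth1_at le_in le_jn). Qed.

Lemma lab_east i j : i <= j <= n -> lab L i j = lab L i i.
Proof.
elim: j => [|j IH] /andP[le_ij lt_jn]; first by case: i le_ij.
have [le_ij'|-> //] : i <= j \/ i = j.+1 by lia.
have le_in : i <= n by lia.
rewrite -IH; last by rewrite le_ij' ltnW.
symmetry; apply/lab_parts_eq/parts_le_sumn_eq.
  by case: (is_growth1_at le_in (ltnW lt_jn)) => _ /(_ lt_jn).
by rewrite !sumn_lab //; [lia | exact: ltnW].
Qed.

Lemma lab_south i j : j <= i <= n -> lab L i j = lab L j j.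
Proof.
elim: i => [|i IH] /andP[le_ji lt_in]; first by case: j le_ji.
have [le_ji'|-> //] : j <= i \/ j = i.+1 by lia.
have le_jn : j <= n by lia.
rewrite -IH; last by rewrite le_ji' ltnW.
symmetry; apply/lab_parts_eq/parts_le_sumn_eq.
  by case: (is_growth1_at (ltnW lt_in) le_jn) => _ _ /(_ lt_in).
by rewrite !sumn_lab //; [lia | exact: ltnW].
Qed.

Lemma lab_minn i j : i <= n -> j <= n -> lab L i j = diagonal L (minn i j).
Proof.
move=> le_in le_jn; case: leqP => [le_ij|/ltnW le_ji].
  by rewrite lab_east ?le_ij.
by rewrite lab_south ?le_ji.
Qed.

Lemma diagonal_covers i : i < n -> covers (diagonal L i) (diagonal L i.+1).
Proof.
move=> lt_in; apply/andP; split.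
  apply/subP_parts_le; rewrite /diagonal -{1}(@lab_south i.+1 i); last by rewrite leqnSn.
  by case: (is_growth1_at lt_in (ltnW lt_in)) => _ /(_ lt_in).
by rewrite /diagonal !sumn_lab ?minnn // ltnW.
Qed.

Lemma tabP_id : tabP L = tab_of_chain (diagonal L) n.
Proof. by apply: eq_tab_of_chain => i le_in y; rewrite lab_minn ?(minn_idPl le_in). Qed.

Lemma tabQ_id : tabQ L = tab_of_chain (diagonal L) n.
Proof. by apply: eq_tab_of_chain => i le_in y; rewrite lab_minn ?(minn_idPr le_in). Qed.

Lemma sq_weight_offdiag i j : i < n -> j < n -> i != j -> sq_weight L i.+1 j.+1 = 1%R.
Proof.
move=> lt_in lt_jn neq_ij; have le_in := ltnW lt_in; have le_jn := ltnW lt_jn.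
rewrite /sq_weight /=; case: ifP => // /andP[/sameP_sumn].
by rewrite !sumn_lab //; move: neq_ij; lia.
Qed.

Lemma sq_weight_diag i : i < n -> sq_weight L i.+1 i.+1 =
  (tv ^ nskew (diagonal L i.+1) (diagonal L i) * alpha (diagonal L i.+1) (diagonal L i))%R.
Proof.
move=> lt_in; have le_in := ltnW lt_in; rewrite /sq_weight /= !lab_minn //.
rewrite (minn_idPl (leqnSn i)) (minn_idPr (leqnSn i)) !minnn diagonal_covers //.
by rewrite /locP /Defs.sameP !eqxx.
Qed.

Lemma growth_weight_id : growth_weight L =
  (tv ^ ((nfun (diagonal L n))%:Z - (nfun (diagonal L 0))%:Z) *
   \prod_(i < n) alpha (diagonal L i.+1) (diagonal L i))%R.
Proof.
rewrite /growth_weight.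
rewrite -(prod_expz_telescope (fun i => (nfun (diagonal L i))%:Z)%R _ tv_neq0).
rewrite -big_split; apply: eq_bigr => i _ /=.
rewrite (bigD1 i) //= big1 ?mulr1; first exact: sq_weight_diag.
by move=> j neq_ji; apply: sq_weight_offdiag; rewrite // eq_sym.
Qed.

End IdentityGrowth.

Lemma filter_iota0_downclosed (p : pred nat) m : (forall x y, x <= y -> p y -> p x) ->
  [seq y <- iota 0 m | p y] = iota 0 (count p (iota 0 m)).
Proof.
move=> p_down; elim: m => // m IH.
rewrite -addn1 iotaD filter_cat count_cat IH /= add0n.
case pm: (p m) => /=; last by rewrite cats0 !addn0.
have -> : count p (iota 0 m) = m.
  rewrite (eq_in_count (a2 := predT)) ?count_predT ?size_iota // => x.
  by rewrite mem_iota => /andP[_ lt_xm]; apply: p_down pm; apply: ltnW.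
by rewrite addn0 iotaD.
Qed.

Lemma nth_sorted_geq s x y : sorted geq s -> x <= y -> nth 0 s y <= nth 0 s x.
Proof.
move=> sorted_s le_xy; case: (ltnP y (size s)) => [lt_y|le_y]; last by rewrite nth_default.
apply: (sorted_leq_nth (rev_trans leq_trans) leqnn) => //.
by rewrite inE (leq_ltn_trans le_xy).
Qed.

Definition chain_row (c : nat -> seq nat) n y :=
  [seq i <- iota 1 n | nth 0 (c i.-1) y < nth 0 (c i) y].

Section ChainTableau.

Variables (n : nat) (D : nat -> seq nat).
Hypothesis sumn_D0 : sumn (D 0) = 0.
Hypothesis D_covers : forall i, i < n -> covers (D i) (D i.+1).

Lemma count_chain_row y k : k <= n ->
  count (fun e => e <= k) (chain_row D n y) = nth 0 (D k) y.
Proof.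
move=> le_kn; set grows := fun i => nth 0 (D i.-1) y < nth 0 (D i) y.
have -> : count (fun e => e <= k) (chain_row D n y) = count grows (iota 1 k).
  rewrite count_filter -(filter_iota_ltn 1 le_kn) count_filter.
  by apply: eq_count => i; rewrite /= andbC.
elim: k le_kn => [_|k IH lt_kn].
  by have := nth_leq_sumn (D 0) y; rewrite sumn_D0 leqn0 => /eqP ->.
have -> : iota 1 k.+1 = iota 1 k ++ [:: k.+1] by rewrite -[k.+1]addn1 iotaD addnC.
rewrite count_cat IH ?(ltnW lt_kn) //= addn0.
rewrite /grows /=; have := covers_nth (D_covers lt_kn) y.
by case: ltnP => /=; lia.
Qed.

Lemma size_chain_row y : size (chain_row D n y) = nth 0 (D n) y.
Proof.
rewrite -(count_chain_row y (leqnn n)) -count_predT; apply: eq_in_count => i.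
by rewrite mem_filter mem_iota => /and3P[_ _ lt_i] /=; lia.
Qed.

Lemma chain_le_last i y : i <= n -> nth 0 (D i) y <= nth 0 (D n) y.
Proof.
move=> le_in; rewrite -(count_chain_row y le_in) -size_chain_row -count_predT.
by apply: sub_count.
Qed.

Hypothesis sorted_Dn : sorted geq (D n).
Hypothesis size_Dn : size (D n) <= n.

Lemma subshape_tab_of_chain i : i <= n ->
  parts_eq (subshape (tab_of_chain D n) i) (D i).
Proof.
move=> le_in; set p := fun y => 0 < nth 0 (D n) y.
have p_down x y : x <= y -> p y -> p x.
  by move=> le_xy /leq_trans; apply; apply: nth_sorted_geq.
(* tab_of_chain drops empty rows; as D n is sorted they form a final segment, so the
   remaining rows keep their indices. *)
have rows : [seq y <- iota 0 n | chain_row D n y != [::]] = iota 0 (count p (iota 0 n)).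
  rewrite -(filter_iota0_downclosed _ p_down); apply: eq_filter => y.
  by rewrite -size_eq0 size_chain_row /p lt0n.
rewrite /subshape /tab_of_chain filter_map rows -map_comp => y.
case: (ltnP y (count p (iota 0 n))) => [lt_y|le_y].
  by rewrite (nth_map 0) ?size_iota // nth_iota //= count_chain_row.
rewrite nth_default ?size_map ?size_iota //; apply/esym/eqP; rewrite -leqn0.
apply: leq_trans (chain_le_last _ le_in) _; rewrite leqn0 eqn0Ngt.
case: (ltnP y n) => [lt_yn|le_ny]; last by rewrite nth_default ?(leq_trans size_Dn).
apply/negP => py; have : y \in [seq y <- iota 0 n | p y].
  by rewrite mem_filter /p py mem_iota add0n lt_yn.
by rewrite filter_iota0_downclosed // mem_iota ltnNge le_y.
Qed.

End ChainTableau.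

Lemma nth_subshape T m y :
  nth 0 (subshape T m) y = count (fun e => e <= m) (nth [::] T y).
Proof.
rewrite /subshape; case: (ltnP y (size T)) => [lt_yT|le_Ty]; first by rewrite (nth_map [::]).
by rewrite !nth_default ?size_map.
Qed.

Lemma subshape_le T m m' : m <= m' -> parts_le (subshape T m) (subshape T m').
Proof. by move=> le_mm' y; rewrite !nth_subshape; apply: sub_count => e /= /leq_trans; apply. Qed.

Lemma subshape_step T i y : 0 < i ->
  (nth 0 (subshape T i.-1) y < nth 0 (subshape T i) y) = (i \in nth [::] T y).
Proof.
move=> i_gt0; rewrite !nth_subshape -has_pred1 has_count.
have -> : count (fun e => e <= i) (nth [::] T y) =
          count (fun e => e <= i.-1) (nth [::] T y) + count (pred1 i) (nth [::] T y).
  rewrite -count_predUI (@eq_count _ (predI _ _) pred0) ?count_pred0 ?addn0.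
    by apply: eq_count => e /=; lia.
  by move=> e /=; lia.
by rewrite -{1}[count _ _]addn0 ltn_add2l.
Qed.

Lemma mem_nth_row (T : seq (seq nat)) y x : x \in nth [::] T y -> nth [::] T y \in T.
Proof. by case: (ltnP y (size T)) => [/(mem_nth [::]) -> | le_Ty] //; rewrite nth_default. Qed.

Section StandardTableau.

Variables (n : nat) (P : seq (seq nat)).
Hypothesis P_SYT : is_SYT n P.

Lemma SYT_mem r x : r \in P -> x \in r -> 0 < x <= n.
Proof.
case/and4P: P_SYT => _ perm_P _ _ r_in x_in.
have : x \in flatten P by apply/flattenP; exists r.
by rewrite (perm_mem perm_P) mem_iota; lia.
Qed.

Lemma size_SYT : size P <= n.
Proof.
case/and4P: P_SYT => /andP[_ rows_gt0] perm_P _ _.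
rewrite -(size_iota 1 n) -(perm_size perm_P) size_flatten.
by elim: P rows_gt0 {perm_P} => //= r T IH /andP[r_gt0 /IH]; lia.
Qed.

Lemma sumn_subshape m : m <= n -> sumn (subshape P m) = m.
Proof.
case/and4P: P_SYT => _ perm_P _ _ le_mn.
rewrite /subshape -count_flatten (seq.permP perm_P) -size_filter.
by rewrite (filter_iota_ltn 1 le_mn) size_iota.
Qed.

Lemma subshape_top : subshape P n = shape P.
Proof.
apply/eq_in_map => r r_in; rewrite -count_predT; apply: eq_in_count => x x_in /=.
by have := SYT_mem r_in x_in; lia.
Qed.

Lemma subshape_bottom : parts_eq (subshape P 0) [::].
Proof.
move=> y; rewrite nth_subshape nth_nil; apply/eqP; rewrite -leqn0 leqNgt -has_count.
apply/hasP => -[x x_in /= x_le0].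
case: (ltnP y (size P)) => [lt_yP|le_Py]; last by rewrite nth_default in x_in.
by have := SYT_mem (mem_nth [::] lt_yP) x_in; lia.
Qed.

Lemma subshape_succ_row m y : nth 0 (subshape P m) y.+1 <= nth 0 (subshape P m) y.
Proof.
case/and4P: P_SYT => /andP[sorted_shape _] _ _ columns.
case: (ltnP y.+1 (size P)) => [lt_yP|le_Py]; last by rewrite nth_subshape nth_default.
set r := nth [::] P y; set r' := nth [::] P y.+1.
have le_size : size r' <= size r.
  move/(sortedP 0)/(_ y): sorted_shape.
  by rewrite /shape size_map !(nth_map [::]) ?(ltnW lt_yP) // => /(_ lt_yP).
have lt_col x : x < size r' -> nth 0 r x < nth 0 r' x.
  move/allP/(_ y): columns; rewrite mem_iota add0n (ltnW lt_yP) => /(_ isT)/allP/(_ x).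
  by rewrite mem_iota; apply.
rewrite !nth_subshape -/r -/r'.
have -> : count (fun e => e <= m) r' =
          count (fun x => (x < size r') && (nth 0 r' x <= m)) (iota 0 (size r')).
  rewrite -[in LHS](mkseq_nth 0 r') /mkseq count_map.
  by apply: eq_in_count => x; rewrite mem_iota /= => ->.
have -> : count (fun e => e <= m) r = count (fun x => nth 0 r x <= m) (iota 0 (size r)).
  by rewrite -[in LHS](mkseq_nth 0 r) /mkseq count_map.
rewrite -(subnKC le_size) iotaD count_cat; apply: leq_trans (leq_addr _ _).
by apply: sub_count => x /andP[/lt_col lt_x le_m]; apply: leq_trans (ltnW lt_x) le_m.
Qed.

Lemma chain_row_subshape y : chain_row (subshape P) n y = nth [::] P y.
Proof.
case/and4P: P_SYT => _ _ rows_sorted _.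
rewrite /chain_row (eq_in_filter (a2 := mem (nth [::] P y))); last first.
  by move=> i; rewrite mem_iota => /andP[i_gt0 _]; rewrite subshape_step.
apply: (irr_sorted_eq ltn_trans ltnn).
- exact: (sorted_filter ltn_trans _ (iota_ltn_sorted 1 n)).
- case: (ltnP y (size P)) => [lt_yP|le_Py]; last by rewrite nth_default.
  by move/allP: rows_sorted; apply; rewrite mem_nth.
- move=> x; rewrite mem_filter andb_idr // => x_in.
  by rewrite mem_iota; have := SYT_mem (mem_nth_row x_in) x_in; lia.
Qed.

Lemma tab_of_subshape : tab_of_chain (subshape P) n = P.
Proof.
case/and4P: P_SYT => /andP[_ rows_gt0] _ _ _.
transitivity [seq r <- map (nth [::] P) (iota 0 n) | r != [::]].
  by congr filter; apply: eq_map => y; exact: chain_row_subshape.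
rewrite -(subnKC size_SYT) iotaD map_cat filter_cat -/(mkseq _ _) mkseq_nth add0n.
rewrite [X in _ ++ X](@eq_in_filter _ _ pred0) ?filter_pred0 ?cats0; last first.
  by move=> r /mapP[y]; rewrite mem_iota => /andP[le_Py _] ->; rewrite nth_default.
apply/all_filterP/allP => r r_in.
by move/allP/(_ (size r) (map_f size r_in)): rows_gt0; case: r {r_in}.
Qed.

Lemma subshape_leq_n m y : m <= n -> nth 0 (subshape P m) y <= n.
Proof. by move=> le_mn; rewrite (leq_trans (nth_leq_sumn _ y)) // sumn_subshape. Qed.

Lemma padded_subshape m : parts_eq (mkseq (nth 0 (subshape P m)) n) (subshape P m).
Proof.
move=> y; case: (ltnP y n) => [lt_yn|le_ny]; first by rewrite nth_mkseq.
rewrite !nth_default ?size_mkseq ?size_map //.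
exact: leq_trans size_SYT le_ny.
Qed.

Definition growth_of : labeling n := [ffun ij : 'I_n.+1 * 'I_n.+1 =>
  [tuple inord (nth 0 (subshape P (minn ij.1 ij.2)) y) | y < n]].

Lemma lab_growth_of i j : i <= n -> j <= n ->
  lab growth_of i j = mkseq (nth 0 (subshape P (minn i j))) n.
Proof.
move=> le_in le_jn; rewrite /lab ffunE /= !inordK ?ltnS //.
rewrite /mkseq -val_enum_ord -!map_comp.
apply: eq_map => y /=; rewrite inordK // ltnS subshape_leq_n //.
exact: leq_trans (geq_minr _ _) le_jn.
Qed.

Lemma growth_of_is_growth : is_growth 1%g growth_of.
Proof.
apply/forallP => i; apply/forallP => j.
have le_in : (i : nat) <= n by rewrite -ltnS.
have le_jn : (j : nat) <= n by rewrite -ltnS.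
have le_min : minn i j <= n := leq_trans (geq_minr _ _) le_jn.
rewrite lab_growth_of //; apply/and4P; split.
- apply/(sortedP 0) => y; rewrite size_mkseq => lt_yn.
  have lt_y : y < n := ltnW lt_yn.
  by rewrite !nth_mkseq //; apply: subshape_succ_row.
- apply/implyP => lt_jn; rewrite lab_growth_of //; apply/subP_parts_le => y.
  by rewrite !padded_subshape subshape_le // leq_min geq_minl (leq_trans (geq_minr _ _)).
- apply/implyP => lt_in; rewrite lab_growth_of //; apply/subP_parts_le => y.
  by rewrite !padded_subshape subshape_le // leq_min geq_minr (leq_trans (geq_minl _ _)).
by rewrite (sumn_parts_eq (padded_subshape _)) sumn_subshape // card_id_rectangle.
Qed.

Lemma diagonal_growth_of i : i <= n -> parts_eq (diagonal growth_of i) (subshape P i).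
Proof. by move=> le_in; rewrite /diagonal lab_growth_of // minnn; apply: padded_subshape. Qed.

Lemma tabs_growth_of : tabP growth_of = P /\ tabQ growth_of = P.
Proof.
rewrite tabP_id ?tabQ_id ?growth_of_is_growth //.
suff -> : tab_of_chain (diagonal growth_of) n = P by [].
by rewrite -[RHS]tab_of_subshape; apply: eq_tab_of_chain => i /diagonal_growth_of.
Qed.

End StandardTableau.

Lemma diagonal_subshape_tabP n (L : labeling n) i : is_growth 1%g L -> i <= n ->
  parts_eq (diagonal L i) (subshape (tabP L) i).
Proof.
move=> L_growth le_in y; rewrite tabP_id // subshape_tab_of_chain //.
- by rewrite /diagonal sumn_lab.
- exact: diagonal_covers.
- by case: (is_growth1_at L_growth (leqnn n) (leqnn n)).
- by rewrite /diagonal size_lab.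
Qed.

Lemma growth_of_unique n P (L : labeling n) :
  is_SYT n P -> is_growth 1%g L -> tabP L = P -> L = growth_of n P.
Proof.
move=> P_SYT L_growth tabPL; apply/ffunP => -[i j].
have le_in : (i : nat) <= n by rewrite -ltnS.
have le_jn : (j : nat) <= n by rewrite -ltnS.
suff : lab L i j = lab (growth_of n P) i j.
  by rewrite /lab !inord_val => /(inj_map val_inj)/val_inj.
apply: lab_parts_eq => y.
have le_min : minn i j <= n := leq_trans (geq_minr _ _) le_jn.
rewrite (lab_minn L_growth) // (lab_minn (growth_of_is_growth P_SYT)) //.
by rewrite diagonal_subshape_tabP // tabPL diagonal_growth_of.
Qed.

Unset Implicit Arguments.
Local Open Scope ring_scope.

Theorem lemma4p29 (n : nat) (hn : (1 <= n)%N) (la : seq nat)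
  (hla : is_partition la) (hsz : sumn la = n)
  (P Q : seq (seq nat))
  (hP : is_SYT n P) (hPsh : shape P = la)
  (hQ : is_SYT n Q) (hQsh : shape Q = la) :
  Pprob (1%g : 'S_n) P Q =
  (if P == Q then
     tv ^+ nfun la *
     \prod_(1 <= i < (sumn la).+1) alpha (subshape P i) (subshape P i.-1)
   else 0).
Proof.
rewrite /Pprob; case: eqP => [<-|neqPQ]; last first.
  apply: big_pred0 => L; apply/and3P => -[L_growth /eqP tabPL /eqP tabQL].
  by apply: neqPQ; rewrite -tabPL -tabQL tabP_id ?tabQ_id.
have [tabP_P tabQ_P] := tabs_growth_of hP.
rewrite (big_pred1 (growth_of n P)) => [|L]; last first.
  apply/and3P/eqP => [[L_growth /eqP tabPL _]|->]; first exact: growth_of_unique.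
  by rewrite growth_of_is_growth // tabP_P tabQ_P.
have diagP := diagonal_growth_of hP.
rewrite growth_weight_id ?growth_of_is_growth // (nfun_parts_eq (diagP _ (leq0n n))).
rewrite (nfun_parts_eq (diagP _ (leqnn n))) (nfun_parts_eq (subshape_bottom hP)).
rewrite subshape_top // hPsh hsz /nfun /cells big_nil subr0 big_add1 /= big_mkord.
congr (_ * _); apply: eq_bigr => i _.
exact: alpha_parts_eq (diagP _ _) (diagP _ (ltnW _)).
Qed.
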